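(* Let $n\ge5$, $x_1,\dots,x_{n-1}>0$, $\gamma,\delta>0$ with $\gamma\ne1\ne\delta$, $x_0=1$, and let $\mathbf{R}$ be the $n\times n$ matrix with entries $r_{ij}=x_{j-1}/x_{i-1}$ except $r_{12}=\delta x_1$, $r_{21}=1/(\delta x_1)$, $r_{34}=\gamma x_3/x_2$, $r_{43}=x_2/(\gamma x_3)$. Let $\mathbf{w}^{EM}$ be its principal right eigenvector. Then for $i=5,\dots,n$: $\delta>1$ iff $w_2^{EM}/w_i^{EM}<x_{i-1}/x_1$, and $\delta<1$ iff $w_2^{EM}/w_i^{EM}>x_{i-1}/x_1$.
   Context: The principal right eigenvector is the positive (Perron) eigenvector belonging to the largest eigenvalue. *)

From HB Require Import structures.
From mathcomp Require Import all_boot all_order all_algebra.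
Set Implicit Arguments. Unset Strict Implicit. Unset Printing Implicit Defensive.
Import Order.TTheory GRing.Theory Num.Theory.
Local Open Scope ring_scope.

(* Indices are 0-based: row/column i : 'I_n corresponds to paper index i+1.
   x : nat -> R with x 0 = 1 stands for x_0, x_1, ..., x_{n-1}.
   Paper entry r_{ij} = x_{j-1}/x_{i-1} becomes (Rmat) i j = x j / x i. *)
Definition Rmat (R : fieldType) (n : nat) (x : nat -> R) (g d : R) : 'M[R]_n :=
  \matrix_(i < n, j < n)
    if ((i : nat) == 0%N) && ((j : nat) == 1%N) then d * x 1%N
    else if ((i : nat) == 1%N) && ((j : nat) == 0%N) then (d * x 1%N)^-1
    else if ((i : nat) == 2%N) && ((j : nat) == 3%N) then g * x 3%N / x 2%N
    else if ((i : nat) == 3%N) && ((j : nat) == 2%N) then x 2%N / (g * x 3%N)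
    else x j / x i.

Definition principal_right_eigenvector (R : realFieldType) (n : nat)
  (A : 'M[R]_n) (w : 'cV[R]_n) : Prop :=
  (forall i, 0 < w i 0) /\
  exists lambda : R, A *m w = lambda *: w /\
    (forall mu : R, eigenvalue A mu -> mu <= lambda).

From HB Require Import structures.
From mathcomp Require Import all_boot all_order all_algebra.
From mathcomp Require Import ring.

Set Implicit Arguments.
Unset Strict Implicit.
Unset Printing Implicit Defensive.

Import Order.TTheory GRing.Theory Num.Theory.
Local Open Scope ring_scope.

(* Weighting row k of Rmat by x_k makes every row 5..n equal to the weighted
   sum S = \sum_m x_m w_m, while the perturbation (d x_1)^-1 in row 2 turns the
   weighted second row into S + (1/d - 1) w_1.  Hence the eigen-equation gives
   lambda (x_i w_i - x_1 w_2) = (1 - 1/d) w_1, and lambda, w_1 > 0, so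
   x_i w_i - x_1 w_2 has the sign of d - 1. *)

Lemma eigenvector_entry (R : pzRingType) (n : nat) (A : 'M[R]_n) (w : 'cV[R]_n)
    (l : R) (k : 'I_n) :
  A *m w = l *: w -> (A *m w) k 0 = l * w k 0.
Proof. by move->; rewrite mxE. Qed.

Section RmatRows.

Variables (R : fieldType) (n : nat) (x : nat -> R) (g d : R).

Lemma Rmat_generic_row (i m : 'I_n) : (4 <= i)%N -> Rmat n x g d i m = x m / x i.
Proof. by case: i => [[|[|[|[|i]]]] ?] //= _; rewrite mxE. Qed.

Lemma Rmat_row1 (j m : 'I_n) : (j : nat) = 1%N ->
  Rmat n x g d j m = if (m : nat) == 0%N then (d * x 1%N)^-1 else x m / x 1%N.
Proof. by move=> ej; rewrite mxE ej; case: ifP. Qed.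

Variable w : 'cV[R]_n.

Lemma Rmat_mul_generic_row (i : 'I_n) : (4 <= i)%N -> x i != 0 ->
  x i * (Rmat n x g d *m w) i 0 = \sum_(m < n) x m * w m 0.
Proof.
move=> i4 xi0; rewrite mxE mulr_sumr; apply: eq_bigr => m _.
by rewrite Rmat_generic_row // mulrA [x i * _]mulrCA divff // mulr1.
Qed.

Lemma Rmat_mul_row1 (j k0 : 'I_n) :
  (j : nat) = 1%N -> (k0 : nat) = 0%N -> x 0%N = 1 -> x 1%N != 0 -> d != 0 ->
  x 1%N * (Rmat n x g d *m w) j 0 =
    \sum_(m < n) x m * w m 0 + (d^-1 - 1) * w k0 0.
Proof.
move=> ej ek0 x0 x10 d0; rewrite mxE !(bigD1 k0 isT) /= mulrDr mulr_sumr.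
rewrite Rmat_row1 // ek0 eqxx x0 addrAC; congr (_ + _); first by field; apply/andP.
apply: eq_bigr => m mk0; rewrite Rmat_row1 //.
have -> : ((m : nat) == 0%N) = false by apply/negbTE; rewrite -ek0.
by rewrite mulrA [x 1%N * _]mulrCA divff // mulr1.
Qed.

Lemma Rmat_eigen_row_difference (l : R) (i j k0 : 'I_n) :
  Rmat n x g d *m w = l *: w ->
  (4 <= i)%N -> (j : nat) = 1%N -> (k0 : nat) = 0%N ->
  x 0%N = 1 -> x i != 0 -> x 1%N != 0 -> d != 0 ->
  l * (x i * w i 0 - x 1%N * w j 0) = (1 - d^-1) * w k0 0.
Proof.
move=> eigw i4 ej ek0 x0 xi0 x10 d0.
rewrite mulrBr [l * (x i * _)]mulrCA [l * (x 1%N * _)]mulrCA.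
rewrite -!(eigenvector_entry _ eigw) Rmat_mul_generic_row //.
by rewrite (Rmat_mul_row1 ej ek0) //; ring.
Qed.

End RmatRows.

Lemma sumr_gt0_ord (R : numDomainType) (n : nat) (F : 'I_n -> R) (k : 'I_n) :
  (forall m, 0 < F m) -> 0 < \sum_(m < n) F m.
Proof.
move=> F_gt0; rewrite (bigD1 k isT) /= ltr_pwDl ?F_gt0 //.
by apply: sumr_ge0 => m _; exact: ltW.
Qed.

Lemma Rmat_eigenvalue_gt0 (R : realFieldType) (n : nat) (x : nat -> R) (g d : R)
    (w : 'cV[R]_n) (l : R) (i : 'I_n) :
  Rmat n x g d *m w = l *: w -> (4 <= i)%N ->
  (forall k : 'I_n, 0 < x k) -> (forall k : 'I_n, 0 < w k 0) -> 0 < l.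
Proof.
move=> eigw i4 x_gt0 w_gt0.
have : 0 < l * (x i * w i 0).
  rewrite mulrCA -(eigenvector_entry _ eigw) Rmat_mul_generic_row ?lt0r_neq0 //.
  by apply: (sumr_gt0_ord i) => m; rewrite mulr_gt0.
by rewrite pmulr_lgt0 // mulr_gt0.
Qed.

Lemma ltr_cross_div (R : numFieldType) (a b c e : R) :
  0 < b -> 0 < e -> (a / b < c / e) = (a * e < c * b).
Proof. by move=> b_gt0 e_gt0; rewrite ltr_pdivrMr // mulrAC ltr_pdivlMr. Qed.

Lemma sign_of_eigen_difference (R : realFieldType) (l c d a b : R) :
  0 < l -> 0 < c -> 0 < d -> l * (a - b) = (1 - d^-1) * c ->
  (1 < d <-> b < a) /\ (d < 1 <-> a < b).
Proof.
move=> l_gt0 c_gt0 d_gt0 eq_diff.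
have -> : (b < a) = (1 < d).
  rewrite -[b < a]subr_gt0 -(pmulr_rgt0 (a - b) l_gt0) eq_diff.
  by rewrite pmulr_lgt0 // subr_gt0 invf_lt1.
have -> : (a < b) = (d < 1).
  rewrite -[a < b]subr_lt0 -(pmulr_rlt0 (a - b) l_gt0) eq_diff.
  by rewrite pmulr_llt0 // subr_lt0 invf_gt1.
by [].
Qed.

Theorem mainTheorem18 (R : realFieldType) (n : nat) (x : nat -> R) (g d : R)
  (w : 'cV[R]_n) :
  (5 <= n)%N ->
  x 0%N = 1 ->
  (forall k : nat, (0 < k < n)%N -> 0 < x k) ->
  0 < g -> g != 1 -> 0 < d -> d != 1 ->
  principal_right_eigenvector (Rmat n x g d) w ->
  forall i j : 'I_n, (j : nat) = 1%N -> (4 <= i)%N ->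
    (1 < d <-> w j 0 / w i 0 < x i / x 1%N) /\
    (d < 1 <-> x i / x 1%N < w j 0 / w i 0).
Proof.
move=> n5 x0 x_gt0 _ _ d_gt0 _ [w_gt0 [l [eigw _]]] i j ej i4.
have xk_gt0 (k : 'I_n) : 0 < x k.
  by case: (posnP k) => [->|k_gt0]; rewrite ?x0 // x_gt0 ?k_gt0 /=.
have x1_gt0 : 0 < x 1%N by rewrite -ej xk_gt0.
pose k0 : 'I_n := Ordinal (leq_trans (isT : (1 <= 5)%N) n5).
have l_gt0 := Rmat_eigenvalue_gt0 eigw i4 xk_gt0 w_gt0.
have diff := Rmat_eigen_row_difference eigw i4 ej (erefl : (k0 : nat) = 0%N) x0
  (lt0r_neq0 (xk_gt0 i)) (lt0r_neq0 x1_gt0) (lt0r_neq0 d_gt0).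
rewrite !ltr_cross_div // [w j 0 * _]mulrC.
exact: (sign_of_eigen_difference l_gt0 (w_gt0 k0) d_gt0 diff).
Qed.
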